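(* Let $P$ be a well-quasi-ordered poset. Then $\mathcal{J}(P)$, as a subspace of $\mathfrak{P}(P)$, is a compact scattered space, and its set of isolated points is exactly $\{\downarrow x: x\in P\}$, the set of principal ideals.
   Context: $\mathfrak{P}(P)$ is the power set of $P$ with the topology whose basic open sets are $O(F,G)=\{X\subseteq P: F\subseteq X,\ G\cap X=\emptyset\}$ for finite $F,G\subseteq P$ (the product topology on $2^P$). $\mathcal{J}(P)$ is the set of ideals of $P$: nonempty initial segments (closed downward) which are up-directed (any two elements have an upper bound in the set). $\downarrow x=\{y\in P: y\leq x\}$. A space is scattered if every nonempty subset has a point isolated in the induced topology. Well-quasi-ordered means well-founded with no infinite antichain. *)

From HB Require Import structures.
From mathcomp Require Import all_boot all_order.
From mathcomp Require Import all_classical all_reals all_analysis.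
Set Implicit Arguments. Unset Strict Implicit. Unset Printing Implicit Defensive.
Import Order.TTheory.
Local Open Scope classical_set_scope.
Local Open Scope order_scope.

(* The power set of P with the product topology of 2^P: a subset X of P is
   represented by its characteristic function P -> bool; bool carries the
   discrete topology and {ptws P -> bool} the product (pointwise) topology. *)
Definition powerspace (d : Order.disp_t) (P : porderType d) : topologicalType :=
  {ptws P -> bool}.

Definition wqo (d : Order.disp_t) (P : porderType d) : Prop :=
  well_founded (fun x y : P => x < y) /\
  ~ (exists f : nat -> P, forall i j : nat, i <> j -> ~~ (f i >=< f j)).

Definition is_ideal (d : Order.disp_t) (P : porderType d) (X : powerspace P) : Prop :=
  (exists x : P, X x) /\
  (forall x y : P, y <= x -> X x -> X y) /\
  (forall x y : P, X x -> X y -> exists z : P, [/\ X z, x <= z & y <= z]).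

Definition ideals (d : Order.disp_t) (P : porderType d) : set (powerspace P) :=
  [set X | is_ideal X].

Definition downset (d : Order.disp_t) (P : porderType d) (x : P) : powerspace P :=
  fun y : P => y <= x.

(* A subset A of a topological space is scattered (in the induced topology):
   every nonempty subset has a point isolated in it.  (Isolation in the
   ambient space relative to S is the same as isolation in the subspace S.) *)
Definition scattered (T : topologicalType) (A : set T) : Prop :=
  forall S : set T, S `<=` A -> S !=set0 -> exists x : T, isolated S x.
Arguments ideals {d} P.
Arguments powerspace {d} P.
Arguments wqo {d} P.
Arguments downset {d P} x.

From HB Require Import structures.
From mathcomp Require Import all_boot all_order.
From mathcomp Require Import all_classical all_reals all_analysis.
Set Implicit Arguments.
Unset Strict Implicit.
Unset Printing Implicit Defensive.
Import Order.TTheory.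
Local Open Scope classical_set_scope.
Local Open Scope order_scope.

(* In a wqo every subset U has a finite basis: a finite s included in U such
   that every element of U lies above some element of s (the minimal elements
   of U form an antichain, hence are finitely many).  If s is a basis of the
   complement of X, then every down-closed set missing s is included in X, so
   X is pinned down among the ideals by finitely many coordinates.  This gives:
   the ideals form a closed, hence compact, subset of 2^P; the principal ideal
   of x is isolated (fix the coordinates x and s); descending chains of
   down-closed sets are stationary, so every nonempty family of ideals has an
   inclusion-minimal member, which is isolated in the family.  Conversely, an
   ideal X is approximated on any finite s by the principal ideal of an upper
   bound of X on s, so an isolated ideal is principal. *)

Lemma minimal_of_no_descending_chain (T : Type) (R : T -> T -> Prop)
    (S : set T) :
  ~ (exists f : nat -> T, forall n, S (f n) /\ R (f n.+1) (f n)) ->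
  S !=set0 -> exists2 x, S x & forall y, S y -> ~ R y x.
Proof.
move=> nochain [x0 Sx0]; apply: contrapT => nomin; apply: nochain.
have step x : exists y, S x -> S y /\ R y x.
  have [Sx|] := pselect (S x); last by exists x.
  have /existsNP[y /not_implyP[Sy /contrapT Ryx]] :
    ~ forall y, S y -> ~ R y x by move=> xmin; apply: nomin; exists x.
  by exists y.
have [g gP] := choice step.
have Sg n : S (iter n g x0) by elim: n => // n /gP[].
by exists (fun n => iter n g x0) => n; split; [|case: (gP _ (Sg n))].
Qed.

Section PointwiseBool.
Variable T : eqType.

Definition agree (f : {ptws T -> bool}) (s : seq T) : set {ptws T -> bool} :=
  [set g | {in s, forall b, g b = f b}].

Lemma nbhs_agree (f : {ptws T -> bool}) (s : seq T) : nbhs f (agree f s).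
Proof.
have nbhs_coord b : nbhs f [set g : {ptws T -> bool} | g b = f b].
  apply: open_nbhs_nbhs; split => //.
  rewrite [X in open X](_ : _ = proj b @^-1` [set f b]) //.
  apply: open_comp; last exact: discrete_open.
  by move=> + _; exact: proj_continuous.
elim: s => [|b s IHs].
  by apply: filterS (@filterT _ (nbhs f) _) => g _ c; rewrite in_nil.
apply: filterS (filterI (nbhs_coord b) IHs) => g [gb gs] c.
by rewrite in_cons => /orP[/eqP->|/gs].
Qed.

Lemma nbhs_agreeP (f : {ptws T -> bool}) (U : set {ptws T -> bool}) :
  nbhs f U <-> exists s, agree f s `<=` U.
Proof.
split=> [fU|[s /filterS]]; last by apply; exact: nbhs_agree.
pose G := filter_from [set: seq T] (agree f).
have FG : Filter G.
  apply: filter_from_filter; first by exists [::].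
  move=> s t _ _; exists (s ++ t) => // g gst.
  by split=> b bs; apply: gst; rewrite mem_cat bs ?orbT.
suff /(_ U fU) [s _ sU] : G --> f by exists s.
apply/cvg_sup => i; apply/cvg_image => //.
  by apply/seteqP; split => // v _; exists (fun=> v).
move=> W /=; rewrite nbhs_principalE => /principal_filterP Wfi.
exists [set g : {ptws T -> bool} | W (g i)].
  by exists [:: i] => // g /(_ i); rewrite mem_seq1 eqxx => /(_ isT) /= ->.
by apply/seteqP; split => [v [g Wg <-]//|v Wv]; exists (fun=> v).
Qed.

Lemma ptws_bool_compact : compact [set: {ptws T -> bool}].
Proof.
have := @tychonoff _ (fun _ : T => bool) _ (fun=> bool_compact).
by congr (compact _); rewrite eqEsubset.
Qed.

End PointwiseBool.

Section Ideals.
Variables (d : Order.disp_t) (P : porderType d).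

Definition downclosed (X : powerspace P) : Prop :=
  forall x y : P, y <= x -> X x -> X y.

Definition upclosure (s : seq P) : set P :=
  [set u | exists2 b, b \in s & b <= u].

Lemma downset_ideal (x : P) : is_ideal (downset x).
Proof.
split; first by exists x; rewrite /downset /=.
split=> [a b ba ax|a b ax bx]; first exact: le_trans ba ax.
by exists x; split; rewrite /downset /=.
Qed.

Lemma ideal_ub_seq (X : powerspace P) (s : seq P) : is_ideal X ->
  exists2 x, X x & {in s, forall b, X b -> b <= x}.
Proof.
move=> [[x0 Xx0] [_ dirX]]; elim: s => [|b s [x Xx xs]].
  by exists x0.
case Xb: (X b); last first.
  by exists x => // c; rewrite in_cons => /orP[/eqP->|/xs//]; rewrite Xb.
have [z [Xz xz bz]] := dirX x b Xx Xb.
exists z => // c; rewrite in_cons => /orP[/eqP->//|/xs cs /cs cx].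
exact: le_trans cx xz.
Qed.

Lemma downclosed_avoiding_sub (X Y : powerspace P) (s : seq P) :
  downclosed Y -> [set p | ~~ X p] `<=` upclosure s ->
  {in s, forall b, ~~ Y b} -> {subset Y <= X}.
Proof.
move=> dY coverX sY p Yp; apply: contraT => nXp.
have [b bs bp] := coverX p nXp.
by have := sY b bs; rewrite (dY _ _ bp Yp).
Qed.

Lemma isolated_ideal_principal (X : powerspace P) :
  isolated (ideals P) X -> exists x, X = downset x.
Proof.
move=> [/set_mem IX [V /nbhs_agreeP[s sV] VI]].
have [x Xx xub] := ideal_ub_seq s IX.
have [_ [dX _]] := IX.
suff : [set X] (downset x) by exists x.
rewrite -VI; split; last exact: downset_ideal.
apply: sV => b bs; apply/idP/idP => [bx|Xb]; first exact: dX bx Xx.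
exact: xub.
Qed.

Section Wqo.
Hypothesis wqoP : wqo P.

Lemma wqo_antichain_finite (A : set P) :
  {in A &, forall x y, x >=< y -> x = y} -> finite_set A.
Proof.
have [_ noac] := wqoP; move=> anti; apply: contrapT.
move=> /infiniteP/card_leP[f].
pose g n := val (f (SigSub (mem_set (I : [set: nat] n)))).
apply: noac; exists g => i j ij; apply/negP.
move=> /(anti _ _ (valP _) (valP _))/val_inj.
by move=> /inj => /(_ (mem_set I) (mem_set I)) [].
Qed.

Lemma wqo_minimal_below (U : set P) (u : P) : U u ->
  exists m, [/\ U m, m <= u & forall v, U v -> ~ v < m].
Proof.
have [wf _] := wqoP.
elim/(well_founded_induction wf): u => u IHu Uu.
have [[v [Uv vu]]|nv] := pselect (exists v, U v /\ v < u).
  have [m [Um mv mmin]] := IHu v vu Uv.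
  by exists m; split => //; exact: le_trans mv (ltW vu).
by exists u; split => // v Uv vu; apply: nv; exists v.
Qed.

Lemma wqo_finite_basis (U : set P) :
  exists s : seq P, [set` s] `<=` U /\ U `<=` upclosure s.
Proof.
pose M := [set m | U m /\ forall v, U v -> ~ v < m].
have /finite_seqP[s Ms] : finite_set M.
  have min_le_eq a b : b <= a -> M a -> M b -> b = a.
    by rewrite le_eqVlt => /orP[/eqP//|ba [_ amin] [Ub _]]; case: (amin b).
  apply: wqo_antichain_finite => x y /set_mem Mx /set_mem My.
  case/orP=> [xy|yx]; first exact: min_le_eq xy My Mx.
  exact/esym/(min_le_eq _ _ yx).
exists s; split; first by rewrite -Ms => m [].
move=> u /wqo_minimal_below[m [Um mu mmin]].
have Mm : M m by [].
by exists m => //; move: Mm; rewrite Ms.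
Qed.

Lemma wqo_downclosed_chain_stationary (f : nat -> powerspace P) :
  (forall n, downclosed (f n)) -> (forall n, {subset f n.+1 <= f n}) ->
  exists n, f n.+1 = f n.
Proof.
move=> df fS.
have f_mono : {homo f : m n / (m <= n)%N >-> {subset n <= m}}.
  apply: (homo_leq (r := fun X Y : powerspace P => {subset Y <= X})) => //.
  - by move=> X.
  - by move=> Y X Z YX ZY p /ZY /YX.
have [s [sU coverU]] := wqo_finite_basis [set p | exists n, ~~ f n p].
have [N sN] : exists N, {in s, forall b, ~~ f N b}.
  elim: s sU {coverU} => [|b s IHs] sU; first by exists 0%N.
  have [|N sN] := IHs; first by move=> c cs; apply/sU/mem_behead.
  have [n fnb] := sU b (mem_head _ _).
  exists (maxn N n) => c; rewrite in_cons => /orP[/eqP->|/sN fNc].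
    exact: contraNN (f_mono _ _ (leq_maxr N n) b) fnb.
  exact: contraNN (f_mono _ _ (leq_maxl N n) c) fNc.
exists N; apply/funext => p; apply/idP/idP => [|fNp]; first exact: fS.
apply: (downclosed_avoiding_sub (df N) _ sN) => // q nfq.
by apply: coverU; exists N.+1.
Qed.

Lemma ideals_closed : closed (ideals P).
Proof.
move=> X clX.
have approx (s : seq P) : exists2 Y, is_ideal Y & {in s, Y =1 X}.
  by have [Y [IY AY]] := clX _ (nbhs_agree X s); exists Y.
split.
  have [s [_ coverP]] := wqo_finite_basis setT.
  have [Y [[y Yy] [dY _]] AY] := approx s.
  have [b bs by'] := coverP y I.
  by exists b; rewrite -(AY b bs); exact: dY by' Yy.
split=> [x y yx Xx|x y Xx Xy].
  have [Y [_ [dY _]] AY] := approx [:: x; y].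
  rewrite -(AY y); last by rewrite !inE eqxx orbT.
  by apply: dY yx _; rewrite (AY x) // !inE eqxx.
have [s [sU coverU]] := wqo_finite_basis [set z | x <= z /\ y <= z].
have [Y [_ [dY dirY]] AY] := approx [:: x, y & s].
have [z [Yz xz yz]] : exists z, [/\ Y z, x <= z & y <= z].
  by apply: dirY; rewrite AY // !inE eqxx ?orbT.
have [b bs bz] := coverU z (conj xz yz).
have [xb yb] := sU b bs.
by exists b; split => //; rewrite -AY ?inE ?bs ?orbT //; exact: dY bz Yz.
Qed.

Lemma ideals_compact : compact (ideals P).
Proof.
by move: (@ptws_bool_compact P) => /(subclosed_compact ideals_closed); apply.
Qed.

Lemma ideals_scattered : scattered (ideals P).
Proof.
move=> S SI S0.
pose R (Y X : powerspace P) := {subset Y <= X} /\ Y <> X.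
have [X SX Xmin] : exists2 X, S X & forall Y, S Y -> ~ R Y X.
  apply: minimal_of_no_descending_chain S0 => -[f fP].
  have dfP n : downclosed (f n) by have [/SI[_ []]] := fP n.
  have [n fn] := wqo_downclosed_chain_stationary dfP (fun n => (fP n).2.1).
  exact: (fP n).2.2.
have [s [sX coverX]] := wqo_finite_basis [set p | ~~ X p].
exists X; split; first exact: mem_set.
exists (agree X s); first exact: nbhs_agree.
apply/seteqP; split => [Y [AY SY]|Y ->]; last by split.
apply: contrapT => YX; apply: (Xmin Y SY); split => //.
have [_ [dY _]] := SI _ SY.
by apply: downclosed_avoiding_sub dY coverX _ => b bs; rewrite AY //; exact: sX.
Qed.

Lemma principal_ideal_isolated (x : P) : isolated (ideals P) (downset x).
Proof.
split; first exact/mem_set/downset_ideal.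
have [s [sx coverx]] := wqo_finite_basis [set p | ~~ downset x p].
exists (agree (downset x) (x :: s)); first exact: nbhs_agree.
apply/seteqP; split => [Y [AY [_ [dY _]]]|Y ->]; last first.
  by split=> //; exact: downset_ideal.
have Yx : Y x by rewrite AY ?mem_head /downset.
apply/funext => p; apply/idP/idP => [|px]; last exact: dY px Yx.
apply: (downclosed_avoiding_sub dY coverx) => b bs.
by rewrite AY ?in_cons ?bs ?orbT //; exact: sx.
Qed.

End Wqo.
End Ideals.

Theorem proposition3p4 (d : Order.disp_t) (P : porderType d) :
  wqo P ->
  [/\ compact (ideals P), scattered (ideals P) &
      isolated (ideals P) = [set X | exists x : P, X = downset x]].
Proof.
move=> wqoP; split.
- exact: ideals_compact wqoP.
- exact: ideals_scattered wqoP.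
- apply/seteqP; split=> [X /isolated_ideal_principal // | X [x ->]].
  exact: principal_ideal_isolated wqoP x.
Qed.
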